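(* Let $\mathcal A$ be a group and $\mathcal H$ a subgroup of $\mathcal A$. If for every generating system $X$ of $\mathcal A$ of size at most $\mathrm{rank}(\mathcal A)+1$ the Schreier graph $\mathrm{Sch}(\mathcal A,\mathcal H,X)$ is vertex-transitive, then $\mathcal H$ is a normal subgroup of $\mathcal A$.
   Context: $\mathrm{rank}(\mathcal A)$ is the minimal cardinality of a generating set. A generating system is a multiset of elements generating $\mathcal A$. The Schreier graph $\mathrm{Sch}(\mathcal A,\mathcal H,X)$ has vertices the right cosets $\mathcal Hg$ and, for each coset and each $x$ with $x\in X$ or $x^{-1}\in X$, an edge labeled $x$ from $\mathcal Hg$ to $\mathcal Hgx$ whose inverse is the edge labeled $x^{-1}$ from $\mathcal Hgx$ (loops and multiple edges allowed). Vertex-transitivity is with respect to all graph automorphisms (not necessarily label-preserving). *)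

From Stdlib Require Import FunctionalExtensionality.
From mathcomp Require Import all_boot.
Set Implicit Arguments.
Unset Strict Implicit.
Unset Printing Implicit Defensive.
Local Open Scope group_scope.

Section GroupDefs.
Variable G : groupType.

Definition is_subgroup (H : G -> Prop) : Prop :=
  [/\ H 1, (forall x y, H x -> H y -> H (x * y)) & (forall x, H x -> H x^-1)].

Definition is_normal (H : G -> Prop) : Prop :=
  is_subgroup H /\ forall g h, H h -> H (g^-1 * h * g).

Definition gen_by (X : seq G) (g : G) : Prop :=
  forall K : G -> Prop, is_subgroup K -> (forall x, x \in X -> K x) -> K g.

Definition generating_system (X : seq G) : Prop := forall g, gen_by X g.

Definition is_rank (r : nat) : Prop :=
  (exists X : seq G, generating_system X /\ size X = r) /\
  (forall X : seq G, generating_system X -> r <= size X).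

Definition rcoset (H : G -> Prop) (g : G) : G -> Prop := fun y => H (y * g^-1).

Definition coset (H : G -> Prop) := {C : G -> Prop | exists g, C = rcoset H g}.

Lemma rcoset_mul_ex (H : G -> Prop) (C : coset H) (x : G) :
  exists g, (fun y => sval C (y * x^-1)) = rcoset H g.
Proof.
case: C => C /= [g ->]; exists (g * x); rewrite /rcoset.
congr (fun y => H _); apply: functional_extensionality => y.
by rewrite invgM mulgA.
Qed.

Definition coset_mul (H : G -> Prop) (C : coset H) (x : G) : coset H :=
  exist _ (fun y => sval C (y * x^-1)) (rcoset_mul_ex C x).

Definition sch_label (X : seq G) := {x : G | (x \in X) || (x^-1 \in X)}.

Lemma sch_label_inv_ok (X : seq G) (s : sch_label X) :
  ((sval s)^-1 \in X) || ((sval s)^-1^-1 \in X).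
Proof. by case: s => x /=; rewrite invgK orbC. Qed.

Definition sch_label_inv (X : seq G) (s : sch_label X) : sch_label X :=
  exist _ (sval s)^-1 (sch_label_inv_ok s).
End GroupDefs.
Local Close Scope group_scope.

(* A graph in the sense of Serre: vertices, (oriented) edges, origin and
   terminus maps, and the edge-reversal map (loops and multiple edges allowed). *)
Record graph := Graph {
  gV : Type;
  gE : Type;
  gsrc : gE -> gV;
  gtgt : gE -> gV;
  grev : gE -> gE }.

(* A graph automorphism (not necessarily label-preserving): a bijection of
   the vertices together with a bijection of the edges compatible with the
   origin, terminus and reversal maps. *)
Definition graph_aut (Gr : graph) (fV : gV Gr -> gV Gr) : Prop :=
  bijective fV /\
  exists fE : gE Gr -> gE Gr,
    [/\ bijective fE,
        forall e, gsrc (fE e) = fV (gsrc e),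
        forall e, gtgt (fE e) = fV (gtgt e) &
        forall e, fE (grev e) = grev (fE e)].

Definition vertex_transitive (Gr : graph) : Prop :=
  forall u v : gV Gr, exists fV, graph_aut fV /\ fV u = v.

(* The Schreier graph Sch(G, H, X): vertices the right cosets H g; for each
   coset C and each label x (x \in X or x^-1 \in X) an edge (C, x) from C to
   C x, whose reverse is the edge (C x, x^-1). *)
Definition schreier_graph (G : groupType) (H : G -> Prop) (X : seq G) : graph :=
  @Graph (coset H) (coset H * sch_label X)%type
    (fun e => e.1)
    (fun e => coset_mul e.1 (sval e.2))
    (fun e => (coset_mul e.1 (sval e.2), sch_label_inv e.2)).

(* If H is not normal, pick h in H and g with g h g^-1 outside H, so that h
   lies outside the conjugate subgroup K = g^-1 H g.  Replacing every element
   of a minimal generating set that lies in K by its product with h and adding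
   h yields a generating system X of size rank + 1 avoiding K.  In Sch(A, H, X)
   the vertex H carries a loop (labelled h), whereas a loop at H g labelled x
   would force x in K; so no automorphism maps H to H g. *)
From Stdlib Require Import Classical FunctionalExtensionality PropExtensionality ProofIrrelevance.
From mathcomp Require Import all_boot.
Set Implicit Arguments.
Unset Strict Implicit.
Unset Printing Implicit Defensive.
Local Open Scope group_scope.

Definition has_loop (Gr : graph) (v : gV Gr) : Prop :=
  exists e : gE Gr, gsrc e = v /\ gtgt e = v.

Lemma graph_aut_has_loop (Gr : graph) (fV : gV Gr -> gV Gr) (v : gV Gr) :
  graph_aut fV -> has_loop v -> has_loop (fV v).
Proof.
by case=> _ [fE [_ fsrc ftgt _]] [e [se te]]; exists (fE e); rewrite fsrc ftgt se te.
Qed.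

Lemma vertex_transitive_has_loop (Gr : graph) (u v : gV Gr) :
  vertex_transitive Gr -> has_loop u -> has_loop v.
Proof. by move=> /(_ u v) [fV [autf <-]]; apply: graph_aut_has_loop. Qed.

Section Generation.
Variable A : groupType.
Implicit Types (H K : A -> Prop) (X Y Z : seq A).

Lemma gen_by_subgroup X : is_subgroup (gen_by X).
Proof.
split=> [K [K1 _ _] _ //|x y Gx Gy K sK KX|x Gx K sK KX].
- by have [_ KM _] := sK; apply: KM; [apply: Gx | apply: Gy].
- by have [_ _ KV] := sK; apply: KV; apply: Gx.
Qed.

Lemma gen_by_mem X x : x \in X -> gen_by X x.
Proof. by move=> Xx K _; apply. Qed.

Lemma gen_byS X Y x : {subset X <= Y} -> gen_by X x -> gen_by Y x.
Proof. by move=> sXY Gx K sK KY; apply: Gx => // y /sXY /KY. Qed.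

Lemma generating_systemS X Y :
  generating_system Y -> (forall y, y \in Y -> gen_by X y) -> generating_system X.
Proof. by move=> genY YX g K sK KX; apply: genY => // y /YX; apply. Qed.

Lemma conj_subgroup H (g : A) :
  is_subgroup H -> is_subgroup (fun z => H (g * z * g^-1)).
Proof.
case=> H1 HM HV; split=> [|x y Hx Hy|x Hx].
- by rewrite mulg1 mulgV.
- by have := HM _ _ Hx Hy; rewrite !mulgA mulgVK.
- by have := HV _ Hx; rewrite !invgM !invgK mulgA.
Qed.

(* Elements of Y lying in K are traded for their product with h, which is
   outside K since K is a subgroup. *)
Lemma avoiding_generators K (h : A) : is_subgroup K -> ~ K h ->
  forall Y, exists Z, [/\ size Z = size Y,
    forall z, z \in h :: Z -> ~ K z &
    forall y, y \in Y -> gen_by (h :: Z) y].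
Proof.
move=> [_ KM KV] nKh; elim=> [|y Y [Z [sizeZ avoidZ genZ]]].
  by exists [::]; split=> // z; rewrite inE => /eqP ->.
have genZ' Z' : {subset Z <= Z'} -> forall y', y' \in Y -> gen_by (h :: Z') y'.
  move=> sZZ' y' /genZ; apply: gen_byS => z; rewrite !inE.
  by case/orP=> [-> // | /sZZ' ->]; rewrite orbT.
case: (classic (K y)) => [Ky|nKy].
- exists (y * h :: Z); split; first by rewrite /= sizeZ.
  + move=> z; rewrite !inE => /or3P [/eqP -> // | /eqP -> Kyh | Zz].
      by apply: nKh; have := KM _ _ (KV _ Ky) Kyh; rewrite mulKg.
    by apply: avoidZ; rewrite inE Zz orbT.
  + move=> y'; rewrite inE => /orP [/eqP -> | ]; last first.
      by apply: genZ' => z Zz; rewrite inE Zz orbT.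
    have [_ GM GV] := gen_by_subgroup (h :: y * h :: Z).
    have := GM _ _ (gen_by_mem (_ : y * h \in h :: y * h :: Z))
                   (GV _ (gen_by_mem (mem_head h _))).
    by rewrite mulgK; apply; rewrite !inE eqxx orbT.
- exists (y :: Z); split; first by rewrite /= sizeZ.
  + move=> z; rewrite !inE => /or3P [/eqP -> // | /eqP -> // | Zz].
    by apply: avoidZ; rewrite inE Zz orbT.
  + move=> y'; rewrite inE => /orP [/eqP -> | ]; last first.
      by apply: genZ' => z Zz; rewrite inE Zz orbT.
    by apply: gen_by_mem; rewrite !inE eqxx orbT.
Qed.
End Generation.

Section SchreierLoops.
Variables (A : groupType) (H : A -> Prop).
Hypothesis sH : is_subgroup H.

Definition rcoset_vertex (g : A) : coset H :=
  exist _ (rcoset H g) (ex_intro _ g erefl).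

Lemma coset_mul_fixed (g x : A) :
  coset_mul (rcoset_vertex g) x = rcoset_vertex g <-> H (g * x * g^-1).
Proof.
have [H1 HM HV] := sH; split=> [/(f_equal (fun C => sval C g))|Hx].
  rewrite /= /rcoset mulgV => E.
  have : H (g * x^-1 * g^-1) by rewrite E.
  by move/HV; rewrite !invgM !invgK mulgA.
apply: eq_sig_hprop => [C p q|]; first exact: proof_irrelevance.
apply: functional_extensionality => y /=; rewrite /rcoset.
apply: propositional_extensionality; split=> Hy.
  by have := HM _ _ Hy Hx; rewrite !mulgA !mulgVK.
by have := HM _ _ Hy (HV _ Hx); rewrite !invgM !invgK !mulgA mulgVK.
Qed.

Lemma schreier_has_loopP (X : seq A) (g : A) :
  @has_loop (schreier_graph H X) (rcoset_vertex g) <->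
  exists2 x, (x \in X) || (x^-1 \in X) & H (g * x * g^-1).
Proof.
split=> [[[C [x Xx]] /= [-> /coset_mul_fixed]]|[x Xx Hx]]; first by exists x.
by exists (rcoset_vertex g, exist _ x Xx); split=> //=; apply/coset_mul_fixed.
Qed.
End SchreierLoops.

Theorem proposition6p3 (A : groupType) (H : A -> Prop) (r : nat) :
  is_subgroup H ->
  is_rank A r ->
  (forall X : seq A, generating_system X -> size X <= r.+1 ->
     vertex_transitive (schreier_graph H X)) ->
  is_normal H.
Proof.
move=> sH [[Y [genY sizeY]] _] VT; split=> //.
move=> g0 h Hh; apply: NNPP => nHh.
pose g := g0^-1; have sK := conj_subgroup g sH.
have nKh : ~ H (g * h * g^-1) by rewrite /g invgK.
have [Z [sizeZ avoidK genZ]] := avoiding_generators sK nKh Y.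
have genX : generating_system (h :: Z) := generating_systemS genY genZ.
have sizeX : size (h :: Z) <= r.+1 by rewrite /= sizeZ sizeY.
have loop1 : @has_loop (schreier_graph H (h :: Z)) (rcoset_vertex H 1).
  by apply/(schreier_has_loopP sH); exists h; rewrite ?mem_head ?mul1g ?invg1 ?mulg1.
have /(schreier_has_loopP sH) [x Xx Kx] :
    @has_loop (schreier_graph H (h :: Z)) (rcoset_vertex H g).
  exact: vertex_transitive_has_loop (VT _ genX sizeX) loop1.
have [_ _ KV] := sK.
by case/orP: Xx => /avoidK; apply=> //; move: (KV _ Kx); rewrite invgK.
Qed.
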